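(* Let $H$ be an infinite-dimensional (not necessarily separable) Hilbert space and let $\mathcal{T}\subseteq B_1$. For $T\in\mathcal{T}$ define $\phi_T:B_1\to B_1$ by $\phi_T(A)=AT$. Then the family $\mathcal{T}^*=\{T^*:T\in\mathcal{T}\}$, regarded as a family of maps $H_1\to H_1$, is UEC if and only if the family $\{\phi_T\}_{T\in\mathcal{T}}$ of maps $B_1\to B_1$ is UEC.
   Context: $H_1$ is the closed unit ball of $H$ and $B_1$ the closed unit ball of $B(H)$. $H_1$ carries the (weak) uniformity whose basic entourages are the sets $\{(x,y)\in H_1\times H_1: |\langle x-y,z_i\rangle|<\epsilon,\ i=1,\dots,N\}$ with $z_i\in H_1$, $N\in\mathbb{N}$, $\epsilon>0$; $B_1$ carries the (weak operator) uniformity whose basic entourages are the sets $\{(A,B)\in B_1\times B_1: |\langle (A-B)w_i,z_i\rangle|<\epsilon,\ i=1,\dots,N\}$ with $w_i,z_i\in H_1$, $N\in\mathbb{N}$, $\epsilon>0$. A family $\mathcal{F}$ of maps from a uniform space $X$ to itself is uniformly equicontinuous (UEC) if for every entourage $U$ there is an entourage $W$ such that $(x,y)\in W$ implies $(f(x),f(y))\in U$ for all $f\in\mathcal{F}$. *)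

From Stdlib Require Import Reals List.
Open Scope R_scope.

Record C := mkC { Re : R; Im : R }.
Definition C0 : C := mkC 0 0.
Definition C1 : C := mkC 1 0.
Definition Cadd (a b : C) : C := mkC (Re a + Re b) (Im a + Im b).
Definition Cmul (a b : C) : C :=
  mkC (Re a * Re b - Im a * Im b) (Re a * Im b + Im a * Re b).
Definition Cconj (a : C) : C := mkC (Re a) (- Im a).
Definition Cmod (a : C) : R := sqrt (Re a * Re a + Im a * Im a).

Record Hilbert := {
  hcar :> Type;
  hzero : hcar;
  hadd : hcar -> hcar -> hcar;
  hopp : hcar -> hcar;
  hscal : C -> hcar -> hcar;
  hinner : hcar -> hcar -> C;
  hadd_assoc : forall x y z, hadd x (hadd y z) = hadd (hadd x y) z;
  hadd_comm : forall x y, hadd x y = hadd y x;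
  hadd_zero : forall x, hadd x hzero = x;
  hadd_opp : forall x, hadd x (hopp x) = hzero;
  hscal_one : forall x, hscal C1 x = x;
  hscal_assoc : forall a b x, hscal a (hscal b x) = hscal (Cmul a b) x;
  hscal_addv : forall a x y, hscal a (hadd x y) = hadd (hscal a x) (hscal a y);
  hscal_adds : forall a b x, hscal (Cadd a b) x = hadd (hscal a x) (hscal b x);
  hinner_add : forall x y z, hinner (hadd x y) z = Cadd (hinner x z) (hinner y z);
  hinner_scal : forall a x z, hinner (hscal a x) z = Cmul a (hinner x z);
  hinner_conj : forall x y, hinner y x = Cconj (hinner x y);
  hinner_pos : forall x, 0 <= Re (hinner x x);
  hinner_def : forall x, hinner x x = C0 -> x = hzero;
  hcomplete : forall u : nat -> hcar,
    (forall eps, 0 < eps -> exists N, forall m n, (N <= m)%nat -> (N <= n)%nat ->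
        sqrt (Re (hinner (hadd (u m) (hopp (u n))) (hadd (u m) (hopp (u n))))) < eps) ->
    exists l, forall eps, 0 < eps -> exists N, forall n, (N <= n)%nat ->
        sqrt (Re (hinner (hadd (u n) (hopp l)) (hadd (u n) (hopp l)))) < eps
}.

Arguments hzero {h}. Arguments hadd {h}. Arguments hopp {h}.
Arguments hscal {h}. Arguments hinner {h}.

Section HilbertDefs.
Variable H : Hilbert.

Definition hsub (x y : H) : H := hadd x (hopp y).
Definition hnorm (x : H) : R := sqrt (Re (hinner x x)).

Definition infinite_dimensional : Prop :=
  forall n : nat, exists e : nat -> H,
    forall i j, (i < n)%nat -> (j < n)%nat ->
      hinner (e i) (e j) = (if Nat.eqb i j then C1 else C0).

Definition VecBall1 (x : H) : Prop := hnorm x <= 1.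

Definition is_linear (T : H -> H) : Prop :=
  (forall x y, T (hadd x y) = hadd (T x) (T y)) /\
  (forall a x, T (hscal a x) = hscal a (T x)).

Definition OpBall1 (T : H -> H) : Prop :=
  is_linear T /\ forall x, hnorm (T x) <= hnorm x.

Definition is_adjoint (T S : H -> H) : Prop :=
  forall x y, hinner (T x) y = hinner x (S y).

(* Uniform equicontinuity of a family F of maps H_1 -> H_1, for the weak
   uniformity on H_1 (stated with basic entourages). *)
Definition UEC_H1 (F : (H -> H) -> Prop) : Prop :=
  forall (zs : list H) (eps : R), (forall z, In z zs -> VecBall1 z) -> 0 < eps ->
  exists (ws : list H) (delta : R),
    (forall w, In w ws -> VecBall1 w) /\ 0 < delta /\
    forall x y, VecBall1 x -> VecBall1 y ->
      (forall w, In w ws -> Cmod (hinner (hsub x y) w) < delta) ->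
      forall f, F f -> forall z, In z zs ->
        Cmod (hinner (hsub (f x) (f y)) z) < eps.

(* Uniform equicontinuity of a family G of maps B_1 -> B_1, for the weak
   operator uniformity on B_1 (stated with basic entourages, indexed by
   finite lists of pairs (w_i, z_i)). *)
Definition UEC_B1 (G : ((H -> H) -> (H -> H)) -> Prop) : Prop :=
  forall (ps : list (H * H)) (eps : R),
    (forall p, In p ps -> VecBall1 (fst p) /\ VecBall1 (snd p)) -> 0 < eps ->
  exists (qs : list (H * H)) (delta : R),
    (forall q, In q qs -> VecBall1 (fst q) /\ VecBall1 (snd q)) /\ 0 < delta /\
    forall A B, OpBall1 A -> OpBall1 B ->
      (forall q, In q qs ->
         Cmod (hinner (hsub (A (fst q)) (B (fst q))) (snd q)) < delta) ->
      forall g, G g -> forall p, In p ps ->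
        Cmod (hinner (hsub (g A (fst p)) (g B (fst p))) (snd p)) < eps.

Definition adjoint_family (Tc : (H -> H) -> Prop) (S : H -> H) : Prop :=
  exists T, Tc T /\ is_adjoint T S.

Definition phi (T : H -> H) : (H -> H) -> (H -> H) := fun A x => A (T x).

Definition phi_family (Tc : (H -> H) -> Prop) (g : (H -> H) -> (H -> H)) : Prop :=
  exists T, Tc T /\ g = phi T.

End HilbertDefs.

(* Both directions rest on the identity
       < (A T - B T) w, z > = conj < T^* (A^* z) - T^* (B^* z), w >,
   which converts a weak-operator entourage for the phi_T into a weak
   entourage for the T^*, and back:
   - (=>) the entourage of B_1 is indexed by the pairs (w, z); apply
     equicontinuity of the T^* at the points A^* z, B^* z of H_1, with
     test vectors w.  This needs adjoints of contractions, which we obtain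
     from the Riesz representation theorem, itself proved from completeness
     by the nearest-point argument in the kernel of a bounded functional.
   - (<=) given x, y in H_1, test the phi_T on the rank-one contractions
     v |-> <v, x> e and v |-> <v, y> e, for a unit vector e of H. *)

From Pilot Require Import Defs.
From Stdlib Require Import Reals List Lra Psatz Classical ClassicalEpsilon.
Open Scope R_scope.

(* Complex numbers.  The type is written [Defs.C] because [Reals] also
   exports a binomial coefficient named [C]. *)

Definition Copp (a : Defs.C) : Defs.C := mkC (- Re a) (- Im a).

Lemma C_ext (a b : Defs.C) : Re a = Re b -> Im a = Im b -> a = b.
Proof. destruct a, b; simpl; intros; subst; reflexivity. Qed.

Ltac cunf := unfold Cadd, Cmul, Cconj, Copp, Defs.C0, Defs.C1 in *; cbn [Re Im] in *.

Lemma Cmod_ge0 (a : Defs.C) : 0 <= Cmod a.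
Proof. apply sqrt_pos. Qed.

Lemma Cmod_sq (a : Defs.C) : Cmod a * Cmod a = Re a * Re a + Im a * Im a.
Proof. unfold Cmod. apply sqrt_sqrt. nra. Qed.

Lemma Re_le_Cmod (a : Defs.C) : Re a <= Cmod a.
Proof. pose proof (Cmod_sq a). pose proof (Cmod_ge0 a). nra. Qed.

Lemma Cmod_conj (a : Defs.C) : Cmod (Cconj a) = Cmod a.
Proof. unfold Cmod; cunf. f_equal; ring. Qed.

Lemma Cmod_mul (a b : Defs.C) : Cmod (Cmul a b) = Cmod a * Cmod b.
Proof. unfold Cmod; cunf. rewrite <- sqrt_mult by nra. f_equal; ring. Qed.

Lemma Cmod_eq0 (a : Defs.C) : Cmod a = 0 -> a = C0.
Proof. intro E. pose proof (Cmod_sq a) as S. rewrite E in S. apply C_ext; cunf; nra. Qed.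

Lemma nonneg_quadratic_discriminant (a b c : R) :
  0 <= c -> (forall t, 0 <= a - b * t + c * t * t) -> b * b <= 4 * a * c.
Proof.
  intros Hc Ht. destruct (Req_dec c 0) as [->|Nc].
  - destruct (Req_dec b 0) as [->|Nb]; [lra|].
    specialize (Ht ((a + 1) / b)).
    replace (a - b * ((a + 1) / b) + 0 * ((a + 1) / b) * ((a + 1) / b)) with (-1)
      in Ht by (field; auto). lra.
  - specialize (Ht (b / (2 * c))).
    replace (a - b * (b / (2 * c)) + c * (b / (2 * c)) * (b / (2 * c)))
      with ((4 * a * c - b * b) / (4 * c)) in Ht by (field; lra).
    assert (Hc4 : 0 < 4 * c) by lra.
    apply (Rmult_le_compat_r (4 * c)) in Ht; [|lra].
    unfold Rdiv in Ht. rewrite Rmult_assoc, Rinv_l, Rmult_0_l in Ht by lra. lra.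
Qed.

Lemma eventually_inv_succ_lt (r : R) :
  0 < r -> exists N, forall n, (N <= n)%nat -> / (INR n + 1) < r.
Proof.
  intro Hr. destruct (archimed_cor1 r Hr) as [N [HN HN0]]. exists N. intros n Hn.
  apply le_INR in Hn. apply lt_INR in HN0. simpl in HN0.
  apply Rle_lt_trans with (/ INR N); [|exact HN].
  apply Rinv_le_contravar; lra.
Qed.

Lemma inv_succ_pos (n : nat) : 0 < / (INR n + 1).
Proof. apply Rinv_0_lt_compat. pose proof (pos_INR n). lra. Qed.

Lemma nonneg_infimum {X : Type} (P : X -> Prop) (g : X -> R) :
  (exists x, P x) -> (forall x, P x -> 0 <= g x) ->
  exists d, 0 <= d /\ (forall x, P x -> d <= g x) /\
    (forall e, 0 < e -> exists x, P x /\ g x < d + e).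
Proof.
  intros [x0 Px0] Hg.
  set (E := fun r => exists x, P x /\ r = - g x).
  assert (Eb : bound E) by (exists 0; intros r [x [Px ->]]; pose proof (Hg x Px); lra).
  destruct (completeness E Eb (ex_intro _ (- g x0) (ex_intro _ x0 (conj Px0 eq_refl))))
    as [m [Hub Hleast]].
  exists (- m). split; [|split].
  - assert (U0 : is_upper_bound E 0) by (intros r [x [Px ->]]; pose proof (Hg x Px); lra).
    apply Hleast in U0. lra.
  - intros x Px. assert (Ex : E (- g x)) by (exists x; auto). apply Hub in Ex. lra.
  - intros e He. apply NNPP. intro Nx.
    assert (U : is_upper_bound E (m - e)).
    { intros r [x [Px ->]]. destruct (Rle_or_lt (- m + e) (g x)) as [L|L]; [lra|].
      exfalso. apply Nx. exists x. auto. }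
    apply Hleast in U. lra.
Qed.

Section HilbertSpace.
Variable H : Hilbert.

(* Squared norm, which avoids square roots in most computations. *)
Definition nsq (x : H) : R := Re (hinner x x).

Lemma inner_zero_l (z : H) : hinner hzero z = C0.
Proof.
  pose proof (hinner_add H hzero hzero z) as E. rewrite hadd_zero in E.
  pose proof (f_equal Re E). pose proof (f_equal Im E). apply C_ext; cunf; lra.
Qed.

Lemma inner_opp_l (x z : H) : hinner (hopp x) z = Copp (hinner x z).
Proof.
  pose proof (hinner_add H x (hopp x) z) as E. rewrite hadd_opp, inner_zero_l in E.
  pose proof (f_equal Re E). pose proof (f_equal Im E). apply C_ext; cunf; lra.
Qed.

Lemma inner_add_r (x y z : H) : hinner x (hadd y z) = Cadd (hinner x y) (hinner x z).
Proof.
  rewrite (hinner_conj H (hadd y z) x), hinner_add, (hinner_conj H x y), (hinner_conj H x z).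
  apply C_ext; cunf; ring.
Qed.

Lemma inner_scal_r (a : Defs.C) (x y : H) :
  hinner x (hscal a y) = Cmul (Cconj a) (hinner x y).
Proof.
  rewrite (hinner_conj H (hscal a y) x), hinner_scal, (hinner_conj H x y).
  apply C_ext; cunf; ring.
Qed.

Lemma inner_opp_r (x y : H) : hinner x (hopp y) = Copp (hinner x y).
Proof.
  rewrite (hinner_conj H (hopp y) x), inner_opp_l, (hinner_conj H x y).
  apply C_ext; cunf; ring.
Qed.

Lemma inner_zero_r (x : H) : hinner x hzero = C0.
Proof. rewrite (hinner_conj H hzero x), inner_zero_l. apply C_ext; cunf; ring. Qed.

Lemma Im_inner_self (x : H) : Im (hinner x x) = 0.
Proof. pose proof (f_equal Im (hinner_conj H x x)). cunf. lra. Qed.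

Lemma Re_inner_sym (x y : H) : Re (hinner y x) = Re (hinner x y).
Proof. rewrite (hinner_conj H x y). reflexivity. Qed.

Ltac inner_expand :=
  unfold hsub in *;
  repeat progress (rewrite ?hinner_add, ?hinner_scal, ?inner_opp_l, ?inner_add_r,
                     ?inner_scal_r, ?inner_opp_r, ?inner_zero_l, ?inner_zero_r in *).

Lemma vec_eq (x y : H) : (forall w, hinner x w = hinner y w) -> x = y.
Proof.
  intro E.
  assert (Z : hadd x (hopp y) = hzero).
  { apply hinner_def. rewrite hinner_add, inner_opp_l, E. apply C_ext; cunf; ring. }
  assert (E2 : hadd (hadd x (hopp y)) y = y) by (rewrite Z, hadd_comm, hadd_zero; reflexivity).
  rewrite <- hadd_assoc, (hadd_comm H (hopp y)), hadd_opp, hadd_zero in E2.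
  exact E2.
Qed.

Lemma hnorm_ge0 (x : H) : 0 <= hnorm H x.
Proof. apply sqrt_pos. Qed.

Lemma hnorm_sq (x : H) : hnorm H x * hnorm H x = nsq x.
Proof. unfold hnorm. apply sqrt_sqrt, hinner_pos. Qed.

(* Cauchy-Schwarz for the real part, from the discriminant of
   t |-> |x - t y|^2. *)
Lemma cauchy_schwarz_Re (x y : H) :
  Re (hinner x y) * Re (hinner x y) <= nsq x * nsq y.
Proof.
  assert (Q : forall t, 0 <= nsq x - (2 * Re (hinner x y)) * t + nsq y * t * t).
  { intro t. pose proof (hinner_pos H (hsub H x (hscal (mkC t 0) y))) as P.
    unfold nsq. inner_expand. cunf. rewrite (Re_inner_sym x y) in P. nra. }
  pose proof (nonneg_quadratic_discriminant _ _ _ (hinner_pos H y) Q). unfold nsq in *. lra.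
Qed.

(* Cauchy-Schwarz: apply the real version to (conj <x,y>) x and y. *)
Lemma cauchy_schwarz (x y : H) : Cmod (hinner x y) <= hnorm H x * hnorm H y.
Proof.
  set (w := hinner x y).
  pose proof (cauchy_schwarz_Re (hscal (Cconj w) x) y) as P.
  set (W := Re w * Re w + Im w * Im w).
  assert (E1 : Re (hinner (hscal (Cconj w) x) y) = W).
  { rewrite hinner_scal. fold w. unfold W. cunf. ring. }
  assert (E2 : nsq (hscal (Cconj w) x) = W * nsq x).
  { unfold nsq. rewrite hinner_scal, inner_scal_r. unfold W. cunf. ring. }
  rewrite E1, E2 in P.
  assert (HW : Cmod w * Cmod w <= nsq x * nsq y).
  { rewrite Cmod_sq. fold W.
    pose proof (hinner_pos H x); pose proof (hinner_pos H y).
    destruct (Req_dec W 0) as [Z|Z]; [unfold nsq in *; nra|].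
    apply Rmult_le_reg_l with W; [unfold W in *; nra|]. nra. }
  rewrite <- (hnorm_sq x), <- (hnorm_sq y) in HW.
  pose proof (hnorm_ge0 x); pose proof (hnorm_ge0 y).
  apply Rsqr_incr_0_var; [unfold Rsqr; lra|nra].
Qed.

Lemma hnorm_scal (a : Defs.C) (x : H) : hnorm H (hscal a x) = Cmod a * hnorm H x.
Proof.
  unfold hnorm, Cmod. rewrite hinner_scal, inner_scal_r, <- sqrt_mult.
  - f_equal. cunf. rewrite (Im_inner_self x). ring.
  - nra.
  - apply hinner_pos.
Qed.

Lemma hnorm_triangle (a b : H) : hnorm H (hadd a b) <= hnorm H a + hnorm H b.
Proof.
  pose proof (cauchy_schwarz a b). pose proof (Re_le_Cmod (hinner a b)).
  assert (E : nsq (hadd a b) = nsq a + nsq b + 2 * Re (hinner a b)).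
  { unfold nsq. inner_expand. cunf. rewrite (Re_inner_sym a b). ring. }
  pose proof (hnorm_sq a); pose proof (hnorm_sq b); pose proof (hnorm_sq (hadd a b)).
  pose proof (hnorm_ge0 a); pose proof (hnorm_ge0 b); pose proof (hnorm_ge0 (hadd a b)).
  nra.
Qed.

Lemma parallelogram (u k k' : H) :
  nsq (hsub H k k') + 4 * nsq (hsub H u (hscal (mkC (1/2) 0) (hadd k k'))) =
  2 * nsq (hsub H u k) + 2 * nsq (hsub H u k').
Proof. unfold nsq. inner_expand. cunf. field. Qed.

Definition converges (k : nat -> H) (l : H) : Prop :=
  forall eps, 0 < eps -> exists N, forall n, (N <= n)%nat -> hnorm H (hsub H (k n) l) < eps.

Definition flin (f : H -> Defs.C) : Prop :=
  (forall x y, f (hadd x y) = Cadd (f x) (f y)) /\ (forall a x, f (hscal a x) = Cmul a (f x)).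

Lemma flin_zero (f : H -> Defs.C) : flin f -> f hzero = C0.
Proof.
  intros [Fa _]. pose proof (Fa hzero hzero) as E. rewrite hadd_zero in E.
  pose proof (f_equal Re E); pose proof (f_equal Im E). apply C_ext; cunf; lra.
Qed.

Lemma flin_sub (f : H -> Defs.C) (x y : H) :
  flin f -> f (hsub H x y) = Cadd (f x) (Copp (f y)).
Proof.
  intros Hf. pose proof (flin_zero f Hf) as Z. destruct Hf as [Fa _].
  pose proof (Fa y (hopp y)) as E. rewrite hadd_opp, Z in E.
  unfold hsub. rewrite Fa. f_equal.
  pose proof (f_equal Re E); pose proof (f_equal Im E). apply C_ext; cunf; lra.
Qed.

Lemma limit_of_minimizing_sequence (u : H) (d : R) (k : nat -> H) (k0 : H) :
  0 <= d -> (forall n, nsq (hsub H u (k n)) < d + / (INR n + 1)) ->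
  converges k k0 -> nsq (hsub H u k0) <= d.
Proof.
  intros Hd Hk Hc.
  assert (Hlim : hnorm H (hsub H u k0) <= sqrt d).
  { apply Rle_plus_epsilon. intros eps He.
    destruct (Hc (eps / 2)) as [N1 HN1]; [lra|].
    destruct (eventually_inv_succ_lt (eps * eps / 4)) as [N2 HN2]; [nra|].
    set (n := Nat.max N1 N2).
    specialize (HN1 n (Nat.le_max_l _ _)). specialize (HN2 n (Nat.le_max_r _ _)).
    pose proof (hnorm_triangle (hsub H u (k n)) (hsub H (k n) k0)) as Tri.
    replace (hadd (hsub H u (k n)) (hsub H (k n) k0)) with (hsub H u k0) in Tri
      by (apply vec_eq; intro w; inner_expand; apply C_ext; cunf; ring).
    pose proof (Hk n) as Hkn. rewrite <- hnorm_sq, <- (sqrt_sqrt d Hd) in Hkn.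
    pose proof (hnorm_ge0 (hsub H u (k n))). pose proof (sqrt_pos d).
    assert (hnorm H (hsub H u (k n)) < sqrt d + eps / 2) by nra.
    lra. }
  rewrite <- hnorm_sq, <- (sqrt_sqrt d Hd). pose proof (hnorm_ge0 (hsub H u k0)).
  apply Rmult_le_compat; assumption.
Qed.

Section Riesz.
Variable f : H -> Defs.C.
Hypothesis f_linear : flin f.
Variable M : R.
Hypothesis M_ge0 : 0 <= M.
Hypothesis f_bounded : forall v, Cmod (f v) <= M * hnorm H v.

Lemma kernel_closed (k : nat -> H) (k0 : H) :
  (forall n, f (k n) = C0) -> converges k k0 -> f k0 = C0.
Proof.
  intros Hk Hc. apply Cmod_eq0, Rle_antisym; [|apply Cmod_ge0].
  apply Rle_plus_epsilon. intros eps He.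
  assert (HM1 : 0 < eps / (M + 1)) by (apply Rdiv_lt_0_compat; lra).
  destruct (Hc _ HM1) as [N HN]. specialize (HN N (le_n N)).
  pose proof (f_bounded (hsub H (k N) k0)) as B.
  rewrite flin_sub, Hk in B by exact f_linear.
  replace (Cmod (Cadd C0 (Copp (f k0)))) with (Cmod (f k0)) in B
    by (unfold Cmod; cunf; f_equal; ring).
  assert (M * hnorm H (hsub H (k N) k0) <= M * (eps / (M + 1)))
    by (apply Rmult_le_compat_l; lra).
  replace (M * (eps / (M + 1))) with (eps - eps / (M + 1)) in * by (field; lra).
  lra.
Qed.

(* A sequence in the kernel whose squared distances to u approach the
   infimum d is Cauchy, by the parallelogram law at the midpoints. *)
Lemma minimizing_sequence_cauchy (u : H) (d : R) (k : nat -> H) :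
  (forall k', f k' = C0 -> d <= nsq (hsub H u k')) ->
  (forall n, f (k n) = C0 /\ nsq (hsub H u (k n)) < d + / (INR n + 1)) ->
  forall eps, 0 < eps -> exists N, forall m n, (N <= m)%nat -> (N <= n)%nat ->
    hnorm H (hsub H (k m) (k n)) < eps.
Proof.
  intros Hlow Hk.
  assert (Hpar : forall m n,
    nsq (hsub H (k m) (k n)) <= 2 * / (INR m + 1) + 2 * / (INR n + 1)).
  { intros m n. destruct (Hk m) as [Fm Dm]. destruct (Hk n) as [Fn Dn].
    assert (Fmid : f (hscal (mkC (1/2) 0) (hadd (k m) (k n))) = C0).
    { destruct f_linear as [Fa Fs]. rewrite Fs, Fa, Fm, Fn. apply C_ext; cunf; ring. }
    pose proof (Hlow _ Fmid). pose proof (parallelogram u (k m) (k n)). lra. }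
  intros eps He.
  destruct (eventually_inv_succ_lt (eps * eps / 4)) as [N HN]; [nra|].
  exists N. intros m n Hm Hn.
  pose proof (HN m Hm). pose proof (HN n Hn). pose proof (Hpar m n).
  pose proof (hnorm_sq (hsub H (k m) (k n))). pose proof (hnorm_ge0 (hsub H (k m) (k n))).
  nra.
Qed.

Lemma kernel_nearest_point (u : H) :
  exists k0, f k0 = C0 /\ forall k, f k = C0 -> nsq (hsub H u k0) <= nsq (hsub H u k).
Proof.
  destruct (nonneg_infimum (fun k => f k = C0) (fun k => nsq (hsub H u k)))
    as [d [Hd [Hlow Happrox]]].
  { exists hzero. apply flin_zero, f_linear. }
  { intros k _. apply hinner_pos. }
  destruct (choice (fun n k => f k = C0 /\ nsq (hsub H u k) < d + / (INR n + 1))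
              (fun n => Happrox _ (inv_succ_pos n))) as [k Hk].
  destruct (hcomplete H k (minimizing_sequence_cauchy u d k Hlow Hk)) as [k0 Hk0].
  exists k0. split.
  - exact (kernel_closed k k0 (fun n => proj1 (Hk n)) Hk0).
  - intros k' Hk'. apply Rle_trans with d; [|exact (Hlow k' Hk')].
    exact (limit_of_minimizing_sequence u d k k0 Hd (fun n => proj2 (Hk n)) Hk0).
Qed.

(* If k0 is a nearest point of u in the kernel, then u - k0 is orthogonal to
   the kernel: the squared distance t |-> |u - k0 - t k|^2 (k in the kernel)
   is minimal at t = 0. *)
Lemma nearest_point_orthogonal (u k0 : H) : f k0 = C0 ->
  (forall k, f k = C0 -> nsq (hsub H u k0) <= nsq (hsub H u k)) ->
  forall k, f k = C0 -> hinner k (hsub H u k0) = C0.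
Proof.
  intros Hk0 Hmin.
  assert (Var : forall k, f k = C0 -> forall t,
    nsq (hsub H u k0) <= nsq (hsub H (hsub H u k0) (hscal (mkC t 0) k))).
  { intros k Hk t.
    replace (hsub H (hsub H u k0) (hscal (mkC t 0) k))
      with (hsub H u (hadd k0 (hscal (mkC t 0) k)))
      by (apply vec_eq; intro w; inner_expand; apply C_ext; cunf; ring).
    apply Hmin. destruct f_linear as [Fa Fs]. rewrite Fa, Fs, Hk, Hk0.
    apply C_ext; cunf; ring. }
  remember (hsub H u k0) as z eqn:Ez. clear Ez Hmin.
  assert (Re0 : forall k, f k = C0 -> Re (hinner k z) = 0).
  { intros k Hk.
    assert (Q : forall t, 0 <= 0 - (2 * Re (hinner k z)) * t + nsq k * t * t).
    { intro t. pose proof (Var k Hk t) as V. unfold nsq in *. inner_expand. cunf.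
      rewrite (Re_inner_sym k z) in V. nra. }
    pose proof (nonneg_quadratic_discriminant _ _ _ (hinner_pos H k) Q). nra. }
  intros k Hk. apply C_ext; [rewrite Re0 by exact Hk; reflexivity|].
  (* the imaginary part of <k, z> is minus the real part of <i k, z> *)
  assert (Hik : f (hscal (mkC 0 1) k) = C0).
  { rewrite (proj2 f_linear), Hk. apply C_ext; cunf; ring. }
  pose proof (Re0 _ Hik) as R1. rewrite hinner_scal in R1. cunf. lra.
Qed.

(* A nonzero vector z orthogonal to the kernel represents f up to the scalar
   conj (f z) / |z|^2: apply orthogonality to f(v) z - f(z) v. *)
Lemma representation_from_orthogonal (z : H) : z <> hzero ->
  (forall k, f k = C0 -> hinner k z = C0) -> exists y, forall v, f v = hinner v y.
Proof.
  intros Hz Horth.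
  set (Nz := nsq z).
  assert (HN : 0 < Nz).
  { pose proof (hinner_pos H z). destruct (Req_dec Nz 0) as [E|E]; [|unfold Nz, nsq in *; lra].
    exfalso. apply Hz, hinner_def. apply C_ext; cunf; [exact E|apply Im_inner_self]. }
  set (a := Re (f z) / Nz). set (b := Im (f z) / Nz).
  exists (hscal (mkC a (- b)) z).
  intro v.
  assert (Hw : f (hadd (hscal (f v) z) (hopp (hscal (f z) v))) = C0).
  { rewrite (proj1 f_linear), <- (hadd_zero H (hopp _)), hadd_comm.
    change (hadd hzero (hopp (hscal (f z) v))) with (hsub H hzero (hscal (f z) v)).
    rewrite flin_sub, flin_zero, !(proj2 f_linear) by exact f_linear.
    apply C_ext; cunf; ring. }
  pose proof (Horth _ Hw) as O.
  rewrite hinner_add, inner_opp_l, !hinner_scal in O.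
  pose proof (f_equal Re O) as O1. pose proof (f_equal Im O) as O2.
  rewrite inner_scal_r. pose proof (Im_inner_self z) as Iz.
  cunf. rewrite Iz in O1, O2.
  assert (Ha : Re (f z) = a * Nz) by (unfold a; field; lra).
  assert (Hb : Im (f z) = b * Nz) by (unfold b; field; lra).
  rewrite Ha, Hb in O1, O2. change (Re (hinner z z)) with Nz in O1, O2.
  apply C_ext; cunf; apply Rmult_eq_reg_r with Nz; try lra; nra.
Qed.

Theorem riesz_representation : exists y, forall v, f v = hinner v y.
Proof.
  destruct (classic (exists u, f u <> C0)) as [[u Hu]|Hzero].
  - destruct (kernel_nearest_point u) as [k0 [Fk0 Hmin]].
    apply (representation_from_orthogonal (hsub H u k0)).
    + intro Z. apply Hu.
      assert (Fz : f (hsub H u k0) = C0) by (rewrite Z; apply flin_zero, f_linear).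
      rewrite flin_sub, Fk0 in Fz by exact f_linear.
      pose proof (f_equal Re Fz); pose proof (f_equal Im Fz). apply C_ext; cunf; lra.
    + exact (nearest_point_orthogonal u k0 Fk0 Hmin).
  - exists hzero. intro v. rewrite inner_zero_r. apply NNPP. intro N. apply Hzero. exists v. exact N.
Qed.

End Riesz.

(* Every contraction T has an adjoint, which is again a contraction: for each
   z the functional v |-> <T v, z> is bounded by |z|, so it is represented by
   a vector S z, and |S z|^2 = <T (S z), z> <= |S z| |z|. *)
Lemma adjoint_contraction (T : H -> H) :
  OpBall1 H T -> exists S, is_adjoint H T S /\ forall z, hnorm H (S z) <= hnorm H z.
Proof.
  intros [[Ta Ts] Tn].
  assert (Tbound : forall v z, Cmod (hinner (T v) z) <= hnorm H v * hnorm H z).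
  { intros v z. apply Rle_trans with (hnorm H (T v) * hnorm H z); [apply cauchy_schwarz|].
    apply Rmult_le_compat_r; [apply hnorm_ge0|apply Tn]. }
  assert (Hrep : forall z, exists y, forall v, hinner (T v) z = hinner v y).
  { intro z. apply (riesz_representation (fun v => hinner (T v) z)) with (M := hnorm H z).
    - split; intros; [rewrite Ta, hinner_add|rewrite Ts, hinner_scal]; reflexivity.
    - apply hnorm_ge0.
    - intro v. rewrite Rmult_comm. apply Tbound. }
  destruct (choice _ Hrep) as [S HS].
  exists S. split; [intros x y; apply HS|].
  intro z.
  assert (Hsq : nsq (S z) <= hnorm H (S z) * hnorm H z).
  { unfold nsq. rewrite <- HS. eapply Rle_trans; [apply Re_le_Cmod|apply Tbound]. }
  rewrite <- hnorm_sq in Hsq. pose proof (hnorm_ge0 (S z)); pose proof (hnorm_ge0 z).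
  nra.
Qed.

Lemma adjoint_difference (A As B Bs : H -> H) (w z : H) :
  is_adjoint H A As -> is_adjoint H B Bs ->
  hinner (hsub H (As z) (Bs z)) w = Cconj (hinner (hsub H (A w) (B w)) z).
Proof.
  intros HA HB. unfold hsub.
  rewrite !hinner_add, !inner_opp_l, HA, HB, (hinner_conj H w (As z)), (hinner_conj H w (Bs z)).
  apply C_ext; cunf; ring.
Qed.

Lemma phi_difference (T S A As B Bs : H -> H) (w z : H) :
  is_adjoint H T S -> is_adjoint H A As -> is_adjoint H B Bs ->
  hinner (hsub H (phi H T A w) (phi H T B w)) z =
  Cconj (hinner (hsub H (S (As z)) (S (Bs z))) w).
Proof.
  intros HT HA HB. unfold phi, hsub.
  rewrite !hinner_add, !inner_opp_l, HA, HB, !HT,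
    (hinner_conj H w (S (As z))), (hinner_conj H w (S (Bs z))).
  apply C_ext; cunf; ring.
Qed.

Definition rank_one (x e : H) : H -> H := fun v => hscal (hinner v x) e.

Lemma rank_one_contraction (x e : H) :
  hnorm H e = 1 -> VecBall1 H x -> OpBall1 H (rank_one x e).
Proof.
  intros He Hx. split; [split|].
  - intros v w. unfold rank_one. rewrite hinner_add, hscal_adds. reflexivity.
  - intros a v. unfold rank_one. rewrite hinner_scal, hscal_assoc. reflexivity.
  - intro v. unfold rank_one. rewrite hnorm_scal, He, Rmult_1_r.
    eapply Rle_trans; [apply cauchy_schwarz|]. unfold VecBall1 in Hx.
    pose proof (hnorm_ge0 v). pose proof (hnorm_ge0 x). nra.
Qed.

Lemma rank_one_difference (x y e q1 q2 : H) :
  hinner (hsub H (rank_one x e q1) (rank_one y e q1)) q2 =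
  Cmul (Cconj (hinner (hsub H x y) q1)) (hinner e q2).
Proof.
  unfold rank_one, hsub.
  rewrite hinner_add, inner_opp_l, !hinner_scal, hinner_add, inner_opp_l,
    (hinner_conj H x q1), (hinner_conj H y q1).
  apply C_ext; cunf; ring.
Qed.

Lemma phi_rank_one (T S : H -> H) (x y e z : H) :
  is_adjoint H T S -> hinner e e = Defs.C1 ->
  hinner (hsub H (phi H T (rank_one x e) z) (phi H T (rank_one y e) z)) e =
  Cconj (hinner (hsub H (S x) (S y)) z).
Proof.
  intros HT He. unfold phi, rank_one, hsub.
  rewrite !hinner_add, !inner_opp_l, !hinner_scal, He, !HT,
    (hinner_conj H z (S x)), (hinner_conj H z (S y)).
  apply C_ext; cunf; ring.
Qed.

End HilbertSpace.

Lemma unit_vector (H : Hilbert) : infinite_dimensional H -> exists e : H, hinner e e = Defs.C1.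
Proof.
  intros Hinf. destruct (Hinf 1%nat) as [e He].
  exists (e 0%nat). exact (He 0%nat 0%nat Nat.lt_0_1 Nat.lt_0_1).
Qed.

(* (=>) A weak-operator entourage of B_1 given by pairs (w0, z0): take the
   entourage of H_1 that makes the adjoints close at the test vectors w0;
   it is given by test vectors w, and the pairs (w, z0) make A^* z0 and
   B^* z0 close in it whenever A and B are weak-operator close. *)
Lemma UEC_adjoints_to_phi (H : Hilbert) (Tc : (H -> H) -> Prop) :
  (forall T, Tc T -> OpBall1 H T) ->
  UEC_H1 H (adjoint_family H Tc) -> UEC_B1 H (phi_family H Tc).
Proof.
  intros HTc U ps eps Hps Heps.
  destruct (U (map fst ps) eps) as [ws [delta [Hws [Hdel Hcond]]]].
  { intros z Hz. apply in_map_iff in Hz. destruct Hz as [p [<- Hp]]. apply (Hps p Hp). }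
  { exact Heps. }
  exists (list_prod ws (map snd ps)), delta. split; [|split; [exact Hdel|]].
  { intros [w z] Hq. apply in_prod_iff in Hq. destruct Hq as [Hw Hz].
    split; [exact (Hws w Hw)|].
    apply in_map_iff in Hz. destruct Hz as [p [<- Hp]]. apply (Hps p Hp). }
  intros A B HA HB Hq g [T [HT ->]] [w0 z0] Hp. simpl.
  destruct (adjoint_contraction H A HA) as [As [HAs HAn]].
  destruct (adjoint_contraction H B HB) as [Bs [HBs HBn]].
  destruct (adjoint_contraction H T (HTc T HT)) as [S [HS _]].
  destruct (Hps _ Hp) as [_ Hz0]. simpl in Hz0.
  rewrite (phi_difference H T S A As B Bs w0 z0 HS HAs HBs), Cmod_conj.
  apply (Hcond (As z0) (Bs z0)).
  - exact (Rle_trans _ _ _ (HAn z0) Hz0).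
  - exact (Rle_trans _ _ _ (HBn z0) Hz0).
  - intros w Hw. rewrite (adjoint_difference H A As B Bs w z0 HAs HBs), Cmod_conj.
    apply (Hq (w, z0)). apply in_prod_iff. split; [exact Hw|].
    apply in_map_iff. exists (w0, z0). auto.
  - exists T. auto.
  - apply in_map_iff. exists (w0, z0). auto.
Qed.

(* (<=) An entourage of H_1 given by test vectors z: take the weak-operator
   entourage making the phi_T close at the pairs (z, e); it is given by pairs
   (q1, q2), and the test vectors q1 make the rank-one operators <., x> e and
   <., y> e weak-operator close whenever x and y are weakly close. *)
Lemma UEC_phi_to_adjoints (H : Hilbert) (Tc : (H -> H) -> Prop) (e : H) :
  hinner e e = Defs.C1 ->
  UEC_B1 H (phi_family H Tc) -> UEC_H1 H (adjoint_family H Tc).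
Proof.
  intros He U zs eps Hzs Heps.
  assert (Ne : hnorm H e = 1) by (unfold hnorm; rewrite He; cunf; apply sqrt_1).
  destruct (U (map (fun z => (z, e)) zs) eps) as [qs [delta [Hqs [Hd Hcond]]]].
  { intros p Hp. apply in_map_iff in Hp. destruct Hp as [z [<- Hz]].
    split; [exact (Hzs z Hz)|]. unfold VecBall1. simpl. lra. }
  { exact Heps. }
  exists (map fst qs), delta. split; [|split; [exact Hd|]].
  { intros w Hw. apply in_map_iff in Hw. destruct Hw as [q [<- Hq]]. apply (Hqs q Hq). }
  intros x y Hx Hy Hw f [T [HT HTS]] z Hz.
  rewrite <- Cmod_conj, <- (phi_rank_one H T f x y e z HTS He).
  refine (Hcond _ _ (rank_one_contraction H x e Ne Hx) (rank_one_contraction H y e Ne Hy)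
            _ (phi H T) _ (z, e) _).
  - intros [q1 q2] Hq. simpl. rewrite rank_one_difference, Cmod_mul, Cmod_conj.
    assert (Cmod (hinner (hsub H x y) q1) < delta).
    { apply Hw. apply in_map_iff. exists (q1, q2). auto. }
    assert (Cmod (hinner e q2) <= 1).
    { eapply Rle_trans; [apply cauchy_schwarz|]. rewrite Ne, Rmult_1_l.
      apply (proj2 (Hqs _ Hq)). }
    pose proof (Cmod_ge0 (hinner e q2)). pose proof (Cmod_ge0 (hinner (hsub H x y) q1)).
    nra.
  - exists T. auto.
  - apply in_map_iff. exists z. auto.
Qed.

Theorem proposition2 (H : Hilbert) (Hinf : infinite_dimensional H)
  (Tc : (H -> H) -> Prop) (HTc : forall T, Tc T -> OpBall1 H T) :
  UEC_H1 H (adjoint_family H Tc) <-> UEC_B1 H (phi_family H Tc).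
Proof.
  destruct (unit_vector H Hinf) as [e He].
  split.
  - exact (UEC_adjoints_to_phi H Tc HTc).
  - exact (UEC_phi_to_adjoints H Tc e He).
Qed.
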